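(* If $G$ is a graph with no isolated vertices, then $\gamma_{\rm gr}^t(G)\le 2\gamma_{\rm gr}(G)$.
   Context: $N(v)$ denotes the open neighborhood and $N[v]=N(v)\cup\{v\}$ the closed neighborhood of $v$. A sequence $S=(v_1,\ldots,v_k)$ of distinct vertices is a legal open neighborhood sequence if $N(v_i)\setminus \bigcup_{j=1}^{i-1} N(v_j)\neq\emptyset$ for every $i\in\{2,\ldots,k\}$, and a total dominating sequence if moreover $\{v_1,\ldots,v_k\}$ is a total dominating set (every vertex has a neighbor in it); $\gamma_{\rm gr}^t(G)$ is the maximum length of a total dominating sequence. A sequence $S=(v_1,\ldots,v_k)$ of distinct vertices is a legal closed neighborhood sequence if $N[v_i]\setminus \bigcup_{j=1}^{i-1} N[v_j]\neq\emptyset$ for every $i\in\{2,\ldots,k\}$, and a dominating sequence if moreover $\{v_1,\ldots,v_k\}$ is a dominating set (every vertex is in it or has a neighbor in it); the Grundy domination number $\gamma_{\rm gr}(G)$ is the maximum length of a dominating sequence. *)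

(* A finite simple graph is a symmetric irreflexive relation e on a finType T. *)
From mathcomp Require Import all_boot.
Set Implicit Arguments. Unset Strict Implicit. Unset Printing Implicit Defensive.

Section Grundy.
Variables (T : finType) (e : rel T).

Definition onbhd (v : T) : {set T} := [set u | e v u].
Definition cnbhd (v : T) : {set T} := v |: onbhd v.

Definition onbhd_seq (s : seq T) : {set T} := \bigcup_(x <- s) onbhd x.
Definition cnbhd_seq (s : seq T) : {set T} := \bigcup_(x <- s) cnbhd x.

(* legal open / closed neighborhood sequences: distinct vertices, each v_i (i >= 2)
   footprints a new vertex; the condition for i = 1 is vacuous as in the paper *)
Definition legal_open_seq (s : seq T) : bool :=
  uniq s && [forall i : 'I_(size s), (0 < i) ==>
     (onbhd (tnth (in_tuple s) i) :\: onbhd_seq (take i s) != set0)].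
Definition legal_closed_seq (s : seq T) : bool :=
  uniq s && [forall i : 'I_(size s), (0 < i) ==>
     (cnbhd (tnth (in_tuple s) i) :\: cnbhd_seq (take i s) != set0)].

Definition total_dominating (A : {set T}) : bool :=
  [forall v, [exists u in A, e v u]].
Definition dominating (A : {set T}) : bool :=
  [forall v, (v \in A) || [exists u in A, e v u]].

Definition total_dominating_seq (s : seq T) : bool :=
  legal_open_seq s && total_dominating [set x in s].
Definition dominating_seq (s : seq T) : bool :=
  legal_closed_seq s && dominating [set x in s].

(* maximum lengths (sequences of distinct vertices have length <= #|T|);
   value 0 if no such sequence exists *)
Definition total_grundy_dom : nat :=
  \max_(k < #|T|.+1 | [exists s : k.-tuple T, total_dominating_seq s]) k.
Definition grundy_dom : nat :=
  \max_(k < #|T|.+1 | [exists s : k.-tuple T, dominating_seq s]) k.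

End Grundy.

From mathcomp Require Import all_boot.
From mathcomp Require Import zify.

Set Implicit Arguments.
Unset Strict Implicit.
Unset Printing Implicit Defensive.

(* A legal open neighbourhood sequence splits into two legal closed neighbourhood
   sequences: put each new vertex [x] into the part that does not contain the vertex
   [u] it footprints in the open sense; then [u] lies in [N[x]] but in no [N[y]] for
   an earlier [y] of that part, since [u] is in no earlier open neighbourhood and is
   not itself such a [y].  Any legal closed sequence extends (in a graph, by
   symmetry: an undominated vertex footprints itself) to a dominating sequence, so
   each part has length at most the Grundy domination number. *)

Section LegalSeq.
Variables (T : finType) (nb : T -> {set T}).

Definition footprints (s : seq T) (x : T) : bool :=
  nb x :\: \bigcup_(y <- s) nb y != set0.

Definition legal_seq (s : seq T) : bool :=
  uniq s && [forall i : 'I_(size s),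
    (0 < i) ==> footprints (take i s) (tnth (in_tuple s) i)].

Lemma forall_ord_iota n (P : nat -> bool) :
  [forall i : 'I_n, P i] = all P (iota 0 n).
Proof.
apply/forallP/allP => P_ i; last by apply: P_; rewrite mem_iota add0n ltn_ord.
by rewrite mem_iota add0n => lt_in; exact: (P_ (Ordinal lt_in)).
Qed.

Lemma legal_seq_rcons s x :
  legal_seq (rcons s x) =
  [&& legal_seq s, x \notin s & (s == [::]) || footprints s x].
Proof.
have legalE t : legal_seq t = uniq t &&
    all (fun i => (0 < i) ==> footprints (take i t) (nth x t i)) (iota 0 (size t)).
  rewrite /legal_seq -forall_ord_iota; congr (_ && _).
  by apply: eq_forallb => i; rewrite (tnth_nth x).
rewrite !legalE rcons_uniq size_rcons -[(size s).+1]addn1 iotaD all_cat /= andbT add0n.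
rewrite nth_rcons ltnn eqxx -cats1 take_size_cat //.
have -> : all (fun i => (0 < i) ==> footprints (take i (s ++ [:: x])) (nth x (s ++ [:: x]) i))
            (iota 0 (size s))
        = all (fun i => (0 < i) ==> footprints (take i s) (nth x s i)) (iota 0 (size s)).
  apply: eq_in_all => i; rewrite mem_iota add0n => /andP [_ lt_is].
  by rewrite nth_cat lt_is takel_cat // ltnW.
by rewrite implybE -eqn0Ngt size_eq0; case: (x \in s); case: (uniq s); case: all.
Qed.

Lemma legal_seq_nil : legal_seq [::].
Proof. by rewrite /legal_seq /=; apply/forallP => -[]. Qed.

Lemma legal_seq_size_le s : legal_seq s -> size s <= #|T|.
Proof. by case/andP => /card_uniqP size_s _; rewrite -size_s max_card. Qed.

End LegalSeq.

Section Graph.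
Variables (T : finType) (e : rel T).

Lemma legal_open_seqE : legal_open_seq e =1 legal_seq (onbhd e).
Proof. by []. Qed.

Lemma legal_closed_seqE : legal_closed_seq e =1 legal_seq (cnbhd e).
Proof. by []. Qed.

Lemma closed_footprint_of_open s C x u :
  u \in onbhd e x :\: \bigcup_(y <- s) onbhd e y ->
  {subset C <= s} -> u \notin C -> footprints (cnbhd e) C x.
Proof.
rewrite in_setD bigcup_seq => /andP [/bigcupP uNs uNx] sub_Cs uNC.
apply/set0Pn; exists u; rewrite in_setD in_setU1 uNx orbT andbT bigcup_seq.
apply/bigcupP => -[y yC]; rewrite in_setU1 => /orP [/eqP uy | uNy].
  by move: uNC; rewrite uy yC.
by apply: uNs; exists y => //; exact: sub_Cs.
Qed.

Lemma legal_open_split s : legal_open_seq e s ->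
  exists A B, [/\ legal_closed_seq e A, legal_closed_seq e B & perm_eq (A ++ B) s].
Proof.
elim/last_ind: s => [|s x IH].
  by move=> _; exists [::], [::]; split=> //; exact: legal_seq_nil.
rewrite legal_open_seqE legal_seq_rcons -legal_open_seqE => /and3P [Ls xNs fp_x].
have [A [B [LA LB pAB]]] := IH Ls.
have uniqAB : uniq (A ++ B) by rewrite (perm_uniq pAB); case/andP: Ls.
have sub_As : {subset A <= s} by move=> y yA; rewrite -(perm_mem pAB) mem_cat yA.
have sub_Bs : {subset B <= s} by move=> y yB; rewrite -(perm_mem pAB) mem_cat yB orbT.
have xNA : x \notin A by apply: contra xNs; exact: sub_As.
have xNB : x \notin B by apply: contra xNs; exact: sub_Bs.
have [-> | s_nil] := eqVneq s [::].
  exists [:: x], [::]; split; [| exact: legal_seq_nil | exact: perm_refl].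
  change (legal_seq (cnbhd e) (rcons [::] x)).
  by rewrite legal_seq_rcons legal_seq_nil.
move: fp_x; rewrite (negbTE s_nil) => /set0Pn [u fp_u].
case: (boolP (u \in A)) => [uA | uNA].
  exists A, (rcons B x); split=> //.
  - rewrite legal_closed_seqE legal_seq_rcons -legal_closed_seqE LB xNB.
    rewrite (closed_footprint_of_open fp_u sub_Bs) ?orbT //.
    move: uniqAB; rewrite cat_uniq => /and3P [_ /hasPn disjAB _].
    by apply: contraL uA => /disjAB.
  - by rewrite -rcons_cat perm_rcons perm_sym perm_rcons perm_cons perm_sym.
exists (rcons A x), B; split=> //.
- rewrite legal_closed_seqE legal_seq_rcons -legal_closed_seqE LA xNA.
  by rewrite (closed_footprint_of_open fp_u sub_As) ?orbT.
- by rewrite cat_rcons perm_sym perm_rcons perm_sym -cat1s perm_catCA cat1s perm_cons.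
Qed.

Hypothesis e_sym : symmetric e.

Lemma legal_closed_extend t : legal_closed_seq e t -> ~~ dominating e [set x in t] ->
  exists v, legal_closed_seq e (rcons t v).
Proof.
move=> Lt; rewrite negb_forall => /existsP [v].
rewrite negb_or inE => /andP [vNt /existsPn vNadj].
exists v; rewrite legal_closed_seqE legal_seq_rcons -legal_closed_seqE Lt vNt /=.
apply/orP; right; apply/set0Pn; exists v.
rewrite in_setD setU11 andbT bigcup_seq; apply/bigcupP => -[y yt].
rewrite in_setU1 => /orP [/eqP vy | vNy]; first by move: vNt; rewrite vy yt.
by move: (vNadj y) vNy; rewrite !inE yt e_sym => /negP.
Qed.

Lemma legal_closed_to_dominating t : legal_closed_seq e t ->
  exists2 t', dominating_seq e t' & size t <= size t'.
Proof.
have [n] := ubnP (#|T| - size t); elim: n t => // n IH t lt_n Lt.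
have [dom_t | ndom_t] := boolP (dominating e [set x in t]).
  by exists t; rewrite // /dominating_seq Lt.
have [v Ltv] := legal_closed_extend Lt ndom_t.
have size_tv := legal_seq_size_le Ltv; rewrite size_rcons in size_tv.
have [t' dom_t' le_tv] : exists2 t', dominating_seq e t' & size (rcons t v) <= size t'.
  by apply: IH Ltv; rewrite size_rcons; lia.
by exists t'; rewrite // (leq_trans _ le_tv) // size_rcons.
Qed.

Lemma dominating_seq_size_le_grundy t : dominating_seq e t -> size t <= grundy_dom e.
Proof.
case/andP => Lt dom_t.
have lt_t : size t < #|T|.+1 by rewrite ltnS; exact: legal_seq_size_le Lt.
apply: (@leq_bigmax_cond _ _ _ (Ordinal lt_t)).
by apply/existsP; exists (in_tuple t); rewrite /dominating_seq Lt.
Qed.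

Lemma legal_closed_size_le_grundy t : legal_closed_seq e t -> size t <= grundy_dom e.
Proof.
move=> /legal_closed_to_dominating [t' dom_t' le_tt'].
exact: leq_trans le_tt' (dominating_seq_size_le_grundy dom_t').
Qed.

End Graph.

Theorem mainTheorem16 (T : finType) (e : rel T)
    (e_sym : symmetric e) (e_irr : irreflexive e)
    (no_isolated : forall v : T, exists u : T, e v u) :
  total_grundy_dom e <= 2 * grundy_dom e.
Proof.
apply/bigmax_leqP => k /existsP [s /andP [Ls _]].
have [A [B [LA LB pAB]]] := legal_open_split Ls.
have le_A := legal_closed_size_le_grundy e_sym LA.
have le_B := legal_closed_size_le_grundy e_sym LB.
by rewrite -(size_tuple s) -(perm_size pAB) size_cat mul2n -addnn leq_add.
Qed.
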